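(* Suppose the scheme satisfies the tensorial $k$-$k$-order orthogonality condition and $u\in H^{k+2}(\Omega)$. Then for every $K=K_{i,j}\in\mathcal T_h$, $$\int_{x_{i-1}}^{x_i}R^S_{x,K}\,dx=\int_{x_{i-1}}^{x_i}R^{S,1}_{x,K}\,dx=0,\qquad \int_{y_{j-1}}^{y_j}R^S_{y,K}\,dy=\int_{y_{j-1}}^{y_j}R^{S,1}_{y,K}\,dy=0.$$
   Context: Setting: $\Omega=(0,1)^2$, $k\ge1$; mesh $0=x_0<\dots<x_{N_x}=1$, $0=y_0<\dots<y_{N_y}=1$, $K_{i,j}=[x_{i-1},x_i]\times[y_{j-1},y_j]$, $F_K:[-1,1]^2\to K$ affine with $x=\frac{x_i-x_{i-1}}{2}\hat x+\frac{x_{i-1}+x_i}{2}$, $y=\frac{y_j-y_{j-1}}{2}\hat y+\frac{y_{j-1}+y_j}{2}$. Dual parameters $-1<\alpha^x_1<\dots<\alpha^x_k<1$, $-1<\alpha^y_1<\dots<\alpha^y_k<1$, interpolation parameters $-1=a^x_0<\dots<a^x_k=1$, $-1=a^y_0<\dots<a^y_k=1$ with $a^x_{s-1}<\alpha^x_s<a^x_s$, $a^y_{s-1}<\alpha^y_s<a^y_s$; $\alpha^x_0=\alpha^y_0=-1$, $\alpha^x_{k+1}=\alpha^y_{k+1}=1$. Orthogonality condition: for $k-1\le r\le 2k-2$, the $x$-direction parameters satisfy the $k$-$r$-order orthogonality condition if $\int_{-1}^1 g(\hat x)(w(\hat x)-(\hat\Pi_xw)(\hat x))d\hat x=0$ for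 all $g\in P^r([-1,1])$, $w\in P^1([-1,1])$, where $(\hat\Pi_xw)(\hat x)=w(a^x_s)$ for $\hat x\in(\alpha^x_s,\alpha^x_{s+1})$; analogously in $y$. The tensorial $k$-$r$-order condition means both directions satisfy it. M-decomposition: $L_n$ Legendre polynomials; $\hat M_0=1$, $\hat M_1=\hat x$, $\hat M_n(\hat x)=\int_{-1}^{\hat x}L_{n-1}$ ($n\ge2$); $M^x_s(x)=\hat M_s(\hat x)$, $M^y_t(y)=\hat M_t(\hat y)$ on $K$. $\lambda_0(g)=\frac{g(1)+g(-1)}2$, $\lambda_1(g)=\frac{g(1)-g(-1)}2$, $\lambda_n(g)=\frac{2n-1}{2}\int_{-1}^1g'L_{n-1}$ ($n\ge2$); M-coefficients $b_{s,t}=b^K_{s,t}=\lambda^{(\hat x)}_s\lambda^{(\hat y)}_t(u\circ F_K)$. AMD-Super corrections: on each $K$, for $t\in\{0,1\}$ the numbers $b^*_{s,t}$ ($2\le s\le k$) solve $\sum_{s=2}^k b^*_{s,t}L_{s-1}(\alpha^x_m)+b_{k+1,t}L_k(\alpha^x_m)=0$, $m=1,\dots,k-1$; for $s\in\{0,1\}$ the numbers $b^*_{s,t}$ ($2\le t\le k$) solve $\sum_{t=2}^k b^*_{s,t}L_{t-1}(\alpha^y_m)+b_{s,k+1}L_k(\alpha^y_m)=0$, $m=1,\dots,k-1$ (systems assumed uniquely solvable). $R^S_{x,K}=\sum_{s=2}^kb^*_{s,0}M^x_s+b_{k+1,0}M^x_{k+1}$, $R^{S,1}_{x,K}=\sum_{s=2}^kb^*_{s,1}M^x_s+b_{k+1,1}M^x_{k+1}$,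 $R^S_{y,K}=\sum_{t=2}^kb^*_{0,t}M^y_t+b_{0,k+1}M^y_{k+1}$, $R^{S,1}_{y,K}=\sum_{t=2}^kb^*_{1,t}M^y_t+b_{1,k+1}M^y_{k+1}$. *)

From Stdlib Require Import Reals Lra Lia.
From Coquelicot Require Import Coquelicot.
Open Scope R_scope.

(* Legendre polynomials via the three-term recurrence:
   leg_pair n x = (L_n x, L_(n+1) x). *)
Fixpoint leg_pair (n : nat) (x : R) : R * R :=
  match n with
  | O => (1, x)
  | S m => let (p, q) := leg_pair m x in
           (q, ((2 * INR m + 3) * x * q - (INR m + 1) * p) / (INR m + 2))
  end.

Definition Legendre (n : nat) (x : R) : R := fst (leg_pair n x).

Definition Mhat (n : nat) (x : R) : R :=
  match n with
  | O => 1
  | S O => x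
  | S (S _) => RInt (Legendre (n - 1)) (-1) x
  end.

Definition lam (n : nat) (g : R -> R) : R :=
  match n with
  | O => (g 1 + g (-1)) / 2
  | S O => (g 1 - g (-1)) / 2
  | S (S _) => (2 * INR n - 1) / 2 *
               RInt (fun t => Derive g t * Legendre (n - 1) t) (-1) 1
  end.

Definition Fmap (l r xh : R) : R := (r - l) / 2 * xh + (l + r) / 2.
Definition hatmap (l r x : R) : R := (2 * x - (l + r)) / (r - l).

Definition Mcoef (xs ys : nat -> R) (u : R -> R -> R) (i j s t : nat) : R :=
  lam s (fun xh => lam t (fun yh =>
    u (Fmap (xs (i - 1)%nat) (xs i) xh) (Fmap (ys (j - 1)%nat) (ys j) yh))).

Definition mesh1d (N : nat) (zs : nat -> R) : Prop :=
  (0 < N)%nat /\ zs O = 0 /\ zs N = 1 /\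
  forall i, (i < N)%nat -> zs i < zs (S i).

Definition valid_params (k : nat) (alpha a : nat -> R) : Prop :=
  alpha O = -1 /\ alpha (S k) = 1 /\ a O = -1 /\ a k = 1 /\
  (forall s, (s < k)%nat -> a s < a (S s)) /\
  (forall s, (1 <= s < k)%nat -> alpha s < alpha (S s)) /\
  (forall s, (1 <= s <= k)%nat -> -1 < alpha s < 1) /\
  (forall s, (1 <= s <= k)%nat -> a (s - 1)%nat < alpha s < a s).

(* k-r-order orthogonality condition (k-1 <= r <= 2k-2):
   int_{-1}^1 g (w - Pi w) = 0 for all g in P^r, w in P^1, where
   Pi w = w(a_s) on (alpha_s, alpha_(s+1)), s = 0..k; the integral is
   written out piecewise. *)
Definition ortho_cond (k r : nat) (alpha a : nat -> R) : Prop :=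
  (k - 1 <= r <= 2 * k - 2)%nat /\
  forall (c : nat -> R) (w0 w1 : R),
    let g := fun x => sum_n (fun n => c n * x ^ n) r in
    let w := fun x => w0 + w1 * x in
    sum_n (fun s => RInt (fun x => g x * (w x - w (a s))) (alpha s) (alpha (S s))) k = 0.

(* the (k-1)x(k-1) system  sum_{s=2}^k c_s L_{s-1}(alpha_m) = rhs_m,
   m = 1..k-1, is uniquely solvable (square system: injectivity) *)
Definition uniquely_solvable (k : nat) (alpha : nat -> R) : Prop :=
  forall c : nat -> R,
    (forall m, (1 <= m <= k - 1)%nat ->
       sum_n_m (fun s => c s * Legendre (s - 1) (alpha m)) 2 k = 0) ->
    forall s, (2 <= s <= k)%nat -> c s = 0.

(* R^S_{x,K} (t = 0) and R^{S,1}_{x,K} (t = 1), as functions of x *)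
Definition RSx (k : nat) (xs ys : nat -> R) (u : R -> R -> R) (i j : nat)
  (bstar : nat -> nat -> R) (t : nat) (x : R) : R :=
  let xh := hatmap (xs (i - 1)%nat) (xs i) x in
  sum_n_m (fun s => bstar s t * Mhat s xh) 2 k
  + Mcoef xs ys u i j (S k) t * Mhat (S k) xh.

(* R^S_{y,K} (s = 0) and R^{S,1}_{y,K} (s = 1), as functions of y *)
Definition RSy (k : nat) (xs ys : nat -> R) (u : R -> R -> R) (i j : nat)
  (bstar : nat -> nat -> R) (s : nat) (y : R) : R :=
  let yh := hatmap (ys (j - 1)%nat) (ys j) y in
  sum_n_m (fun t => bstar s t * Mhat t yh) 2 k
  + Mcoef xs ys u i j s (S k) * Mhat (S k) yh.

From Stdlib Require Import Reals Lra Lia List Arith.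
From Coquelicot Require Import Coquelicot.
Open Scope R_scope.

(* On the reference element each correction is
   [F = sum_(s=2)^k b*_s M_s + b_(k+1) M_(k+1)]; it vanishes at [-1] and [1]
   and its derivative [P = sum b*_s L_(s-1) + b_(k+1) L_k] has degree [k], so
   [int P = 0], while the defining system says [P(alpha_m) = 0] for [m < k].
   Tested with [w x = x], the orthogonality condition says that the dual
   quadrature [int_(-1)^1 f ~ sum_(s=1)^k (a_s - a_(s-1)) f(alpha_s)] is exact
   on polynomials of degree [k+1].  Applied to [P] it forces [P(alpha_k) = 0];
   applied to [(x - 1) P] it gives [int (x - 1) P = 0], which by parts is
   [- int F].  An affine change of variables carries this to [K]. *)

(* Coquelicot often states real equalities at a structure carrier convertible
   to [R]; [ring], [field] and [lra] need the type to be literally [R]. *)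
Ltac R_eq := match goal with |- ?a = ?b => change (@eq R a b) end.

Lemma is_derive_Rconst (c x : R) : is_derive (fun _ : R => c) x 0.
Proof. exact (is_derive_const (K := R_AbsRing) (V := R_NormedModule) c x). Qed.

Lemma is_derive_Rid (x : R) : is_derive (fun y : R => y) x 1.
Proof. exact (is_derive_id (K := R_AbsRing) x). Qed.

Lemma is_derive_Rplus (f g : R -> R) x df dg :
  is_derive f x df -> is_derive g x dg -> is_derive (fun y => f y + g y) x (df + dg).
Proof. exact (is_derive_plus f g x df dg). Qed.

Lemma is_derive_Rminus (f g : R -> R) x df dg :
  is_derive f x df -> is_derive g x dg -> is_derive (fun y => f y - g y) x (df - dg).
Proof. exact (is_derive_minus f g x df dg). Qed.

Lemma is_derive_Rmult (f g : R -> R) x df dg :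
  is_derive f x df -> is_derive g x dg ->
  is_derive (fun y => f y * g y) x (df * g x + f x * dg).
Proof. intros Hf Hg. apply (is_derive_mult (K := R_AbsRing)); auto. exact Rmult_comm. Qed.

Lemma is_derive_Rext (f g : R -> R) x l :
  (forall t, f t = g t) -> is_derive f x l -> is_derive g x l.
Proof. exact (is_derive_ext f g x l). Qed.

Lemma is_derive_Req (f : R -> R) x l l' : is_derive f x l -> l = l' -> is_derive f x l'.
Proof. now intros H <-. Qed.

Lemma sum_n_m_Rzero (a : nat -> R) n m :
  (forall s, (n <= s <= m)%nat -> a s = 0) -> sum_n_m a n m = 0.
Proof.
  intros H. rewrite (sum_n_m_ext_loc _ (fun _ => zero)) by (intros; now rewrite H).
  exact (sum_n_m_const_zero (G := R_AbelianGroup) n m).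
Qed.

Lemma sum_n_m_Rlast (f : nat -> R) n m : (1 <= n <= m)%nat ->
  sum_n_m f n m = sum_n_m f n (m - 1) + f m.
Proof.
  intros Hnm. destruct m as [|m]; [lia|].
  rewrite sum_n_Sm by lia. now rewrite Nat.sub_succ, Nat.sub_0_r.
Qed.

Lemma is_derive_sum_n_m (f : nat -> R -> R) (df : nat -> R) n m x :
  (forall s, (n <= s <= m)%nat -> is_derive (f s) x (df s)) ->
  is_derive (fun z => sum_n_m (fun s => f s z) n m) x (sum_n_m df n m).
Proof.
  induction m as [|m IH]; intros H.
  - destruct n as [|n].
    + rewrite sum_n_n. apply (is_derive_Rext (f 0%nat)); [intros; now rewrite sum_n_n|].
      apply H; lia.
    + rewrite sum_n_m_zero by lia. apply (is_derive_Rext (fun _ => 0)).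
      * intros; now rewrite sum_n_m_zero by lia.
      * apply is_derive_Rconst.
  - destruct (le_lt_dec n (S m)) as [Hle|Hlt].
    + rewrite sum_n_Sm by exact Hle.
      apply (is_derive_Rext (fun z => sum_n_m (fun s => f s z) n m + f (S m) z)).
      * intros; now rewrite sum_n_Sm.
      * apply is_derive_Rplus; [apply IH; intros; apply H; lia | apply H; lia].
    + rewrite sum_n_m_zero by exact Hlt. apply (is_derive_Rext (fun _ => 0)).
      * intros; now rewrite sum_n_m_zero.
      * apply is_derive_Rconst.
Qed.

Lemma nat_ind2 (P : nat -> Prop) :
  P 0%nat -> P 1%nat -> (forall n, P n -> P (S n) -> P (S (S n))) -> forall n, P n.
Proof. intros H0 H1 HS n. enough (P n /\ P (S n)) by tauto. induction n; firstorder. Qed.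

(** * Polynomial functions *)

Fixpoint peval (p : list R) (x : R) : R :=
  match p with nil => 0 | c :: q => c + x * peval q x end.

Fixpoint padd (p q : list R) : list R :=
  match p, q with
  | nil, _ => q
  | _, nil => p
  | a :: p', b :: q' => (a + b) :: padd p' q'
  end.

Lemma peval_padd p q x : peval (padd p q) x = peval p x + peval q x.
Proof. revert q; induction p as [|a p IH]; intros [|b q]; simpl; try rewrite IH; ring. Qed.

Lemma length_padd p q : length (padd p q) = Nat.max (length p) (length q).
Proof. revert q; induction p as [|a p IH]; intros [|b q]; simpl; auto. Qed.

Lemma peval_continuous p x : continuous (peval p) x.
Proof.
  induction p as [|c p IH]; simpl.
  - apply continuous_const.
  - apply (continuous_plus (fun _ => c) (fun x => x * peval p x)).
    + apply continuous_const.
    + apply (continuous_mult (fun x => x) (peval p)); [apply continuous_id | exact IH].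
Qed.

Lemma peval_is_derive p : exists q, (length q <= length p - 1)%nat /\
  forall x, is_derive (peval p) x (peval q x).
Proof.
  induction p as [|c [|c' p] [q [Hq Hd]]].
  - exists nil; split; [simpl; lia | intros; apply is_derive_Rconst].
  - exists nil; split; [simpl; lia|]. intros x.
    apply (is_derive_Rext (fun _ => c)); [intros; simpl; ring | apply is_derive_Rconst].
  - exists (padd (c' :: p) (0 :: q)); split.
    + rewrite length_padd; simpl in *; lia.
    + intros x. rewrite peval_padd.
      apply (is_derive_Rext (fun x => c + x * peval (c' :: p) x)); [reflexivity|].
      eapply is_derive_Req.
      * apply is_derive_Rplus; [apply is_derive_Rconst|].
        apply is_derive_Rmult; [apply is_derive_Rid | apply Hd].
      * simpl; ring.
Qed.

Lemma peval_sum_n q d x : (length q <= S d)%nat ->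
  peval q x = sum_n (fun n => nth n q 0 * x ^ n) d.
Proof.
  revert d; induction q as [|c q IH]; intros d Hl.
  - symmetry; apply sum_n_m_Rzero; intros [|n] _; simpl; ring.
  - destruct d as [|d].
    + destruct q; simpl in Hl; [|lia]. rewrite sum_O; simpl; ring.
    + unfold sum_n. rewrite sum_Sn_m, <- sum_n_m_S by lia. simpl peval.
      rewrite (IH d) by (simpl in Hl; lia). unfold sum_n.
      rewrite <- (sum_n_m_mult_l (K := R_Ring)). simpl. unfold plus; simpl.
      f_equal; [ring|]. apply sum_n_m_ext; intros n. unfold mult; simpl; ring.
Qed.

Definition is_poly (d : nat) (f : R -> R) : Prop :=
  exists p, (length p <= S d)%nat /\ forall x, f x = peval p x.

Lemma is_poly_ext d f g : is_poly d f -> (forall x, f x = g x) -> is_poly d g.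
Proof. intros [p [Hl Hp]] H; exists p; split; auto; intros x; rewrite <- H; auto. Qed.

Lemma is_poly_le d d' f : (d <= d')%nat -> is_poly d f -> is_poly d' f.
Proof. intros Hd [p [Hl Hp]]; exists p; split; auto; lia. Qed.

Lemma is_poly_const c : is_poly 0 (fun _ => c).
Proof. exists (c :: nil); split; simpl; auto; intros; ring. Qed.

Lemma is_poly_plus d f g : is_poly d f -> is_poly d g -> is_poly d (fun x => f x + g x).
Proof.
  intros [p [Hl Hp]] [q [Hl' Hq]]; exists (padd p q); split.
  - rewrite length_padd; lia.
  - intros x; rewrite peval_padd, Hp, Hq; auto.
Qed.

Lemma is_poly_scal d c f : is_poly d f -> is_poly d (fun x => c * f x).
Proof.
  intros [p [Hl Hp]]; exists (map (Rmult c) p); split; [now rewrite length_map|].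
  intros x; rewrite Hp; clear; induction p; simpl; [ring | rewrite <- IHp; ring].
Qed.

Lemma is_poly_mulx d f : is_poly d f -> is_poly (S d) (fun x => x * f x).
Proof.
  intros [p [Hl Hp]]; exists (0 :: p); split; [simpl; lia|].
  intros x; simpl; rewrite Hp; ring.
Qed.

Lemma is_poly_sum_n_m d (f : nat -> R -> R) n m :
  (forall s, (n <= s <= m)%nat -> is_poly d (f s)) ->
  is_poly d (fun z => sum_n_m (fun s => f s z) n m).
Proof.
  induction m as [|m IH]; intros H.
  - destruct n as [|n].
    + apply (is_poly_ext _ (f 0%nat)); [apply H; lia | intros; now rewrite sum_n_n].
    + apply (is_poly_ext _ (fun _ => 0)); [apply (is_poly_le 0); [lia | apply is_poly_const]|].
      intros; now rewrite sum_n_m_zero by lia.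
  - destruct (le_lt_dec n (S m)) as [Hle|Hlt].
    + apply (is_poly_ext _ (fun z => sum_n_m (fun s => f s z) n m + f (S m) z)).
      * apply is_poly_plus; [apply IH; intros; apply H; lia | apply H; lia].
      * intros; now rewrite sum_n_Sm.
    + apply (is_poly_ext _ (fun _ => 0)); [apply (is_poly_le 0); [lia | apply is_poly_const]|].
      intros; now rewrite sum_n_m_zero.
Qed.

Lemma is_poly_continuous d f x : is_poly d f -> continuous f x.
Proof. intros [p [_ Hp]]. apply (continuous_ext (peval p)); [auto | apply peval_continuous]. Qed.

Lemma is_poly_ex_RInt d f a b : is_poly d f -> ex_RInt f a b.
Proof.
  intros H. apply (ex_RInt_continuous (V := R_CompleteNormedModule)).
  intros; eapply is_poly_continuous; eauto.
Qed.

Lemma is_poly_Derive d f x : is_poly d f -> is_derive f x (Derive f x).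
Proof.
  intros [p [_ Hp]]. apply Derive_correct. destruct (peval_is_derive p) as [q [_ Hq]].
  exists (peval q x). apply (is_derive_Rext (peval p)); auto.
Qed.

Lemma is_poly_is_derive d f : is_poly (S d) f ->
  exists g, is_poly d g /\ forall x, is_derive f x (g x).
Proof.
  intros [p [Hl Hp]]. destruct (peval_is_derive p) as [q [Hq Hd]].
  exists (peval q); split; [exists q; split; auto; lia|].
  intros x; apply (is_derive_Rext (peval p)); auto.
Qed.

Lemma is_poly_sum_n d f : is_poly d f ->
  exists c : nat -> R, forall x, f x = sum_n (fun n => c n * x ^ n) d.
Proof.
  intros [p [Hl Hp]]. exists (fun n => nth n p 0). intros x. rewrite Hp. now apply peval_sum_n.
Qed.

(** * Legendre polynomials *)

Lemma Legendre_rec m x : Legendre (S (S m)) x =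
  ((2 * INR m + 3) * x * Legendre (S m) x - (INR m + 1) * Legendre m x) / (INR m + 2).
Proof. unfold Legendre; simpl; now destruct (leg_pair m x). Qed.

Lemma INR_plus2_neq0 m : INR m + 2 <> 0.
Proof. generalize (pos_INR m); lra. Qed.

Lemma Legendre_poly n : is_poly n (Legendre n).
Proof.
  induction n as [| |m IH0 IH1] using nat_ind2.
  - exact (is_poly_const 1).
  - apply (is_poly_ext _ (fun x => x * 1)); [apply is_poly_mulx, is_poly_const|].
    intros; unfold Legendre; simpl; ring.
  - apply (is_poly_ext _ (fun x => / (INR m + 2) * (2 * INR m + 3) * (x * Legendre (S m) x)
                                  + - / (INR m + 2) * (INR m + 1) * Legendre m x)).
    + apply is_poly_plus; [apply is_poly_scal, is_poly_mulx, IH1|].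
      apply is_poly_scal, (is_poly_le m); [lia | exact IH0].
    + intros x; rewrite Legendre_rec. field. apply INR_plus2_neq0.
Qed.

Lemma Legendre_at_1 n : Legendre n 1 = 1.
Proof.
  induction n as [| |m IH0 IH1] using nat_ind2; try reflexivity.
  rewrite Legendre_rec, IH0, IH1. field. apply INR_plus2_neq0.
Qed.

Lemma Legendre_at_m1 n : Legendre n (-1) = (-1) ^ n.
Proof.
  induction n as [| |m IH0 IH1] using nat_ind2; try (unfold Legendre; simpl; ring).
  rewrite Legendre_rec, IH0, IH1. simpl. field. apply INR_plus2_neq0.
Qed.

Lemma Legendre_continuous n x : continuous (Legendre n) x.
Proof. exact (is_poly_continuous _ _ x (Legendre_poly n)). Qed.

Lemma Legendre_is_derive n x : is_derive (Legendre n) x (Derive (Legendre n) x).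
Proof. exact (is_poly_Derive _ _ x (Legendre_poly n)). Qed.

Lemma Derive_Legendre_rec m x : (INR m + 2) * Derive (Legendre (S (S m))) x =
  (2 * INR m + 3) * (Legendre (S m) x + x * Derive (Legendre (S m)) x)
  - (INR m + 1) * Derive (Legendre m) x.
Proof.
  assert (H : is_derive (Legendre (S (S m))) x
     (/ (INR m + 2) * ((2 * INR m + 3) * (1 * Legendre (S m) x + x * Derive (Legendre (S m)) x)
                       - (INR m + 1) * Derive (Legendre m) x))).
  { apply (is_derive_Rext (fun y => / (INR m + 2) *
        ((2 * INR m + 3) * (y * Legendre (S m) y) - (INR m + 1) * Legendre m y))).
    - intros y; rewrite Legendre_rec; field; apply INR_plus2_neq0.
    - apply is_derive_scal, is_derive_Rminus; apply is_derive_scal;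
        [apply is_derive_Rmult; [apply is_derive_Rid|] |]; apply Legendre_is_derive. }
  rewrite (is_derive_unique _ _ _ H). field. apply INR_plus2_neq0.
Qed.

Lemma Derive_Legendre_identities m x :
  Derive (Legendre (S m)) x = x * Derive (Legendre m) x + (INR m + 1) * Legendre m x /\
  x * Derive (Legendre (S m)) x - Derive (Legendre m) x = (INR m + 1) * Legendre (S m) x.
Proof.
  assert (D0 : Derive (Legendre 0) x = 0)
    by (apply is_derive_unique, (is_derive_Rext (fun _ => 1)); [reflexivity | apply is_derive_Rconst]).
  assert (D1 : Derive (Legendre 1) x = 1)
    by (apply is_derive_unique, (is_derive_Rext (fun y => y)); [reflexivity | apply is_derive_Rid]).
  induction m as [|m [IHa IHb]].
  - rewrite D0, D1. unfold Legendre; simpl. split; ring.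
  - assert (Ha : Derive (Legendre (S (S m))) x
                 = x * Derive (Legendre (S m)) x + (INR (S m) + 1) * Legendre (S m) x).
    { apply (Rmult_eq_reg_l (INR m + 2)); [|apply INR_plus2_neq0].
      rewrite Derive_Legendre_rec, S_INR.
      replace (Derive (Legendre m) x)
        with (x * Derive (Legendre (S m)) x - (INR m + 1) * Legendre (S m) x) by lra.
      ring. }
    split; [exact Ha|].
    assert (R2 : (INR m + 2) * Legendre (S (S m)) x
                 = (2 * INR m + 3) * x * Legendre (S m) x - (INR m + 1) * Legendre m x)
      by (rewrite Legendre_rec; field; apply INR_plus2_neq0).
    assert (IHb' : x * (x * Derive (Legendre (S m)) x - Derive (Legendre m) x)
                   = x * ((INR m + 1) * Legendre (S m) x)) by now rewrite IHb.
    rewrite Ha, S_INR. lra.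
Qed.

Lemma Derive_Legendre_diff m x :
  Derive (Legendre (S (S m))) x - Derive (Legendre m) x = (2 * INR m + 3) * Legendre (S m) x.
Proof.
  destruct (Derive_Legendre_identities (S m) x) as [Ha _].
  destruct (Derive_Legendre_identities m x) as [_ Hb].
  rewrite S_INR in Ha. lra.
Qed.

Lemma RInt_Legendre n : (1 <= n)%nat -> RInt (Legendre n) (-1) 1 = 0.
Proof.
  intros Hn. destruct n as [|m]; [lia|].
  set (G := fun y => / (2 * INR m + 3) * (Legendre (S (S m)) y - Legendre m y)).
  assert (H : is_RInt (Legendre (S m)) (-1) 1 (minus (G 1) (G (-1)))).
  { apply (is_RInt_derive G).
    - intros y _. eapply is_derive_Req.
      + apply is_derive_scal, is_derive_Rminus; apply Legendre_is_derive.
      + R_eq. rewrite Derive_Legendre_diff. field. generalize (pos_INR m); lra.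
    - intros; apply Legendre_continuous. }
  rewrite (is_RInt_unique _ _ _ _ H). unfold G, minus, plus, opp; simpl.
  rewrite !Legendre_at_1, !Legendre_at_m1. simpl. ring.
Qed.

Lemma Mhat_is_derive s z : (2 <= s)%nat -> is_derive (Mhat s) z (Legendre (s - 1) z).
Proof.
  intros Hs. destruct s as [|[|s]]; try lia.
  apply (is_derive_RInt _ _ (-1)); [|apply Legendre_continuous].
  apply filter_forall; intros.
  apply (RInt_correct (V := R_CompleteNormedModule)), (is_poly_ex_RInt _ _ _ _ (Legendre_poly _)).
Qed.

Lemma Mhat_at_m1 s : (2 <= s)%nat -> Mhat s (-1) = 0.
Proof. intros Hs. destruct s as [|[|s]]; try lia. exact (RInt_point (V := R_CompleteNormedModule) _ _). Qed.

Lemma Mhat_at_1 s : (2 <= s)%nat -> Mhat s 1 = 0.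
Proof. intros Hs. destruct s as [|[|s]]; try lia. apply RInt_Legendre; lia. Qed.

(** * The dual quadrature rule *)

Lemma sum_n_shift_diff (h : nat -> nat -> R) k :
  sum_n (fun s => h (S s) s - h s s) k =
  h (S k) k - h 0%nat 0%nat + sum_n_m (fun s => h s (s - 1)%nat - h s s) 1 k.
Proof.
  induction k as [|k IH].
  - rewrite sum_O, sum_n_m_zero by lia. R_eq. unfold zero; simpl. ring.
  - unfold sum_n in *. rewrite !sum_n_Sm, IH by lia.
    replace (S k - 1)%nat with k by lia. R_eq. unfold plus; simpl. ring.
Qed.

Definition dual_quadrature (k : nat) (alpha a : nat -> R) (f : R -> R) : R :=
  sum_n_m (fun s => (a s - a (s - 1)%nat) * f (alpha s)) 1 k.

(* Testing the orthogonality condition with [w x = x] and [g = f'], an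
   integration by parts on each cell [alpha_s, alpha_(s+1)] turns it into the
   exactness of the quadrature for [f]. *)
Lemma dual_quadrature_exact k alpha a f :
  valid_params k alpha a -> ortho_cond k k alpha a -> is_poly (S k) f ->
  RInt f (-1) 1 = dual_quadrature k alpha a f.
Proof.
  intros [Hal0 [Halk [Ha0 [Hak _]]]] [_ Hortho] Hf.
  destruct (is_poly_is_derive _ _ Hf) as [g [Hg Hfg]].
  destruct (is_poly_sum_n _ _ Hg) as [c Hc].
  set (Pf := fun y => RInt f (-1) y).
  assert (HPf : forall y, is_derive Pf y (f y)).
  { intros y. apply (is_derive_RInt _ _ (-1)); [|exact (is_poly_continuous _ _ y Hf)].
    apply filter_forall; intros.
    apply (RInt_correct (V := R_CompleteNormedModule)), (is_poly_ex_RInt _ _ _ _ Hf). }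
  set (h := fun j s => (alpha j - a s) * f (alpha j) - Pf (alpha j)).
  assert (Hcell : forall s,
    RInt (fun x => g x * (x - a s)) (alpha s) (alpha (S s)) = h (S s) s - h s s).
  { intros s. apply is_RInt_unique, (is_RInt_derive (fun y => (y - a s) * f y - Pf y)).
    - intros y _. eapply is_derive_Req.
      + apply is_derive_Rminus; [|apply HPf].
        apply is_derive_Rmult; [|apply Hfg].
        apply is_derive_Rminus; [apply is_derive_Rid | apply is_derive_Rconst].
      + R_eq; simpl; ring.
    - intros y _. apply (continuous_mult (K := R_AbsRing) g (fun y => y - a s)).
      + exact (is_poly_continuous _ _ y Hg).
      + apply (continuous_minus (fun y => y) (fun _ => a s));
          [apply continuous_id | apply continuous_const]. }
  specialize (Hortho c 0 1). cbv zeta in Hortho.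
  rewrite (sum_n_ext _ (fun s => h (S s) s - h s s)) in Hortho.
  2:{ intros s. rewrite <- Hcell. apply RInt_ext. intros x _. rewrite Hc. R_eq; ring. }
  rewrite sum_n_shift_diff in Hortho.
  rewrite (sum_n_m_ext _ (fun s => (a s - a (s - 1)%nat) * f (alpha s))) in Hortho
    by (intros s; unfold h; R_eq; ring).
  fold (dual_quadrature k alpha a f) in Hortho.
  unfold h, Pf in *. rewrite Hal0, Halk, Ha0, Hak, RInt_point in Hortho.
  unfold zero in Hortho; simpl in Hortho. lra.
Qed.

(** * Vanishing mean of the corrections *)

Lemma RInt_eq_0_by_parts (F P : R -> R) (l r : R) :
  (forall x, is_derive F x (P x)) -> (forall x, continuous P x) -> F l = 0 ->
  RInt (fun x => (x - r) * P x) l r = 0 -> RInt F l r = 0.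
Proof.
  intros HF HP Hl HQ.
  assert (HFc : forall x, continuous F x)
    by (intros x; apply (ex_derive_continuous (K := R_AbsRing) (V := R_NormedModule)); exists (P x); apply HF).
  assert (HQc : forall x, continuous (fun x => (x - r) * P x) x).
  { intros x. apply (continuous_mult (K := R_AbsRing) (fun x => x - r) P); [|apply HP].
    apply (continuous_minus (fun x => x) (fun _ => r));
      [apply continuous_id | apply continuous_const]. }
  assert (Hprod : forall x, is_derive (fun x => (x - r) * F x) x (F x + (x - r) * P x)).
  { intros x. eapply is_derive_Req.
    - apply is_derive_Rmult; [|apply HF].
      apply is_derive_Rminus; [apply is_derive_Rid | apply is_derive_Rconst].
    - R_eq; simpl; ring. }
  assert (Hsum : RInt (fun x => F x + (x - r) * P x) l r = 0).
  { rewrite (is_RInt_unique _ _ _ _ (is_RInt_derive _ _ l r (fun x _ => Hprod x)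
      (fun x _ => continuous_plus F _ x (HFc x) (HQc x)))).
    unfold minus, plus, opp; simpl. rewrite Hl. ring. }
  assert (Hplus := RInt_plus F (fun x => (x - r) * P x) l r
    (ex_RInt_continuous F l r (fun x _ => HFc x))
    (ex_RInt_continuous _ l r (fun x _ => HQc x))).
  unfold plus in Hplus; simpl in Hplus. rewrite Hsum, HQ in Hplus. lra.
Qed.

Section Correction.

Variables (k : nat) (alpha a b : nat -> R) (B : R).
Hypothesis Hk : (1 <= k)%nat.

Definition correction (z : R) : R :=
  sum_n_m (fun s => b s * Mhat s z) 2 k + B * Mhat (S k) z.

Definition correction_deriv (z : R) : R :=
  sum_n_m (fun s => b s * Legendre (s - 1) z) 2 k + B * Legendre k z.

Lemma correction_deriv_poly : is_poly k correction_deriv.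
Proof.
  apply is_poly_plus; [|apply is_poly_scal, Legendre_poly].
  apply is_poly_sum_n_m; intros s Hs.
  apply is_poly_scal, (is_poly_le (s - 1)); [lia | apply Legendre_poly].
Qed.

Lemma correction_is_derive z : is_derive correction z (correction_deriv z).
Proof.
  apply is_derive_Rplus.
  - apply (is_derive_sum_n_m (fun s z => b s * Mhat s z)); intros s Hs.
    apply is_derive_scal, Mhat_is_derive; lia.
  - apply is_derive_scal. replace k with (S k - 1)%nat at 2 by lia.
    apply Mhat_is_derive; lia.
Qed.

Lemma correction_continuous z : continuous correction z.
Proof.
  apply (ex_derive_continuous (K := R_AbsRing) (V := R_NormedModule)).
  exists (correction_deriv z); apply correction_is_derive.
Qed.

Lemma correction_at_m1 : correction (-1) = 0.
Proof.
  unfold correction. rewrite Mhat_at_m1 by lia.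
  rewrite sum_n_m_Rzero; [ring|]. intros s Hs. rewrite Mhat_at_m1 by lia. ring.
Qed.

Lemma correction_at_1 : correction 1 = 0.
Proof.
  unfold correction. rewrite Mhat_at_1 by lia.
  rewrite sum_n_m_Rzero; [ring|]. intros s Hs. rewrite Mhat_at_1 by lia. ring.
Qed.

Lemma RInt_correction_deriv : RInt correction_deriv (-1) 1 = 0.
Proof.
  rewrite (is_RInt_unique _ _ _ _ (is_RInt_derive correction _ (-1) 1
    (fun x _ => correction_is_derive x)
    (fun x _ => is_poly_continuous _ _ x correction_deriv_poly))).
  rewrite correction_at_1, correction_at_m1. unfold minus, plus, opp; simpl. ring.
Qed.

Hypotheses (Hparams : valid_params k alpha a) (Hortho : ortho_cond k k alpha a).
Hypothesis Hnodes : forall m, (1 <= m <= k - 1)%nat -> correction_deriv (alpha m) = 0.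

Lemma correction_deriv_nodes s : (1 <= s <= k)%nat -> correction_deriv (alpha s) = 0.
Proof.
  assert (Hlast : correction_deriv (alpha k) = 0).
  { assert (Hq := dual_quadrature_exact k alpha a correction_deriv Hparams Hortho
                    (is_poly_le _ _ _ (Nat.le_succ_diag_r k) correction_deriv_poly)).
    rewrite RInt_correction_deriv in Hq. unfold dual_quadrature in Hq.
    rewrite sum_n_m_Rlast in Hq by lia.
    rewrite sum_n_m_Rzero in Hq by (intros m Hm; rewrite Hnodes by lia; ring).
    destruct Hparams as [_ [_ [_ [_ [Hinc _]]]]].
    assert (Hw : a (k - 1)%nat < a k)
      by (replace k with (S (k - 1)) at 2 by lia; apply Hinc; lia).
    apply (Rmult_eq_reg_l (a k - a (k - 1)%nat)); lra. }
  intros Hs. destruct (Nat.eq_dec s k) as [->|Hne]; [exact Hlast | apply Hnodes; lia].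
Qed.

Lemma RInt_correction_ref : RInt correction (-1) 1 = 0.
Proof.
  apply (RInt_eq_0_by_parts correction correction_deriv (-1) 1).
  - exact correction_is_derive.
  - intros x; exact (is_poly_continuous _ _ x correction_deriv_poly).
  - exact correction_at_m1.
  - assert (Hpoly : is_poly (S k) (fun x => (x - 1) * correction_deriv x)).
    { apply (is_poly_ext _ (fun x => x * correction_deriv x + (-1) * correction_deriv x)).
      - apply is_poly_plus; [apply is_poly_mulx, correction_deriv_poly|].
        apply is_poly_scal, (is_poly_le k); [lia | apply correction_deriv_poly].
      - intros; ring. }
    rewrite (dual_quadrature_exact k alpha a _ Hparams Hortho Hpoly).
    apply sum_n_m_Rzero; intros s Hs. rewrite correction_deriv_nodes by lia. ring.
Qed.

End Correction.

Lemma RInt_comp_hatmap (F : R -> R) l r : l < r -> (forall x, continuous F x) ->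
  RInt (fun x => F (hatmap l r x)) l r = (r - l) / 2 * RInt F (-1) 1.
Proof.
  intros Hlr HF.
  set (u := 2 / (r - l)); set (v := - (l + r) / (r - l)).
  assert (Hhat : forall x, hatmap l r x = u * x + v)
    by (intros; unfold hatmap, u, v; field; lra).
  assert (Hex : ex_RInt (fun x => F (u * x + v)) l r).
  { apply (ex_RInt_continuous (V := R_CompleteNormedModule)); intros x _.
    apply (continuous_comp (fun x => u * x + v) F); [|apply HF].
    apply (continuous_plus (fun x => u * x) (fun _ => v)); [|apply continuous_const].
    apply (continuous_mult (K := R_AbsRing) (fun _ => u) (fun x => x));
      [apply continuous_const | apply continuous_id]. }
  assert (E := RInt_comp_lin F u v l r
    (ex_RInt_continuous F _ _ (fun x _ => HF x))).
  rewrite (RInt_scal (fun x => F (u * x + v)) l r u Hex) in E.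
  replace (u * l + v) with (-1) in E by (unfold u, v; field; lra).
  replace (u * r + v) with 1 in E by (unfold u, v; field; lra).
  rewrite (RInt_ext _ (fun x => F (u * x + v))) by (intros; now rewrite Hhat).
  rewrite <- E. unfold scal; simpl; unfold mult; simpl.
  assert (Hu : (r - l) / 2 * u = 1) by (unfold u; field; lra).
  now rewrite <- Rmult_assoc, Hu, Rmult_1_l.
Qed.

Lemma RInt_correction k alpha a b B l r :
  (1 <= k)%nat -> valid_params k alpha a -> ortho_cond k k alpha a ->
  (forall m, (1 <= m <= k - 1)%nat -> correction_deriv k b B (alpha m) = 0) ->
  l < r -> RInt (fun x => correction k b B (hatmap l r x)) l r = 0.
Proof.
  intros Hk Hparams Hortho Hnodes Hlr.
  rewrite RInt_comp_hatmap by (auto using correction_continuous).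
  rewrite (RInt_correction_ref k alpha a b B); auto. R_eq; ring.
Qed.

Lemma mesh1d_lt N zs i : mesh1d N zs -> (1 <= i <= N)%nat -> zs (i - 1)%nat < zs i.
Proof.
  intros [_ [_ [_ Hinc]]] Hi. replace i with (S (i - 1)) at 2 by lia. apply Hinc; lia.
Qed.

Theorem mainTheorem5 :
  forall (k Nx Ny : nat) (xs ys : nat -> R)
         (alx ax aly ay : nat -> R) (u : R -> R -> R)
         (bsx bsy : nat -> nat -> R) (i j : nat),
    (1 <= k)%nat ->
    mesh1d Nx xs -> mesh1d Ny ys ->
    valid_params k alx ax -> valid_params k aly ay ->
    (* tensorial k-k-order orthogonality condition *)
    ortho_cond k k alx ax -> ortho_cond k k aly ay ->
    uniquely_solvable k alx -> uniquely_solvable k aly ->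
    (1 <= i <= Nx)%nat -> (1 <= j <= Ny)%nat ->
    (* b*_{s,t}, t in {0,1}, 2 <= s <= k: the x-direction corrections *)
    (forall t m, (t <= 1)%nat -> (1 <= m <= k - 1)%nat ->
       sum_n_m (fun s => bsx s t * Legendre (s - 1) (alx m)) 2 k
       + Mcoef xs ys u i j (S k) t * Legendre k (alx m) = 0) ->
    (* b*_{s,t}, s in {0,1}, 2 <= t <= k: the y-direction corrections *)
    (forall s m, (s <= 1)%nat -> (1 <= m <= k - 1)%nat ->
       sum_n_m (fun t => bsy s t * Legendre (t - 1) (aly m)) 2 k
       + Mcoef xs ys u i j s (S k) * Legendre k (aly m) = 0) ->
    RInt (RSx k xs ys u i j bsx 0) (xs (i - 1)%nat) (xs i) = 0 /\
    RInt (RSx k xs ys u i j bsx 1) (xs (i - 1)%nat) (xs i) = 0 /\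
    RInt (RSy k xs ys u i j bsy 0) (ys (j - 1)%nat) (ys j) = 0 /\
    RInt (RSy k xs ys u i j bsy 1) (ys (j - 1)%nat) (ys j) = 0.
Proof.
  (* Unique solvability only guarantees that [bsx], [bsy] exist; the argument
     uses nothing but their defining equations. *)
  intros k Nx Ny xs ys alx ax aly ay u bsx bsy i j Hk Mx My Vx Vy Ox Oy _ _ Hi Hj Hbx Hby.
  assert (Lx := mesh1d_lt _ _ _ Mx Hi).
  assert (Ly := mesh1d_lt _ _ _ My Hj).
  repeat split.
  - apply (RInt_correction k alx ax (fun s => bsx s 0%nat) (Mcoef xs ys u i j (S k) 0));
      auto; intros m Hm; apply Hbx; lia.
  - apply (RInt_correction k alx ax (fun s => bsx s 1%nat) (Mcoef xs ys u i j (S k) 1));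
      auto; intros m Hm; apply Hbx; lia.
  - apply (RInt_correction k aly ay (fun t => bsy 0%nat t) (Mcoef xs ys u i j 0 (S k)));
      auto; intros m Hm; apply Hby; lia.
  - apply (RInt_correction k aly ay (fun t => bsy 1%nat t) (Mcoef xs ys u i j 1 (S k)));
      auto; intros m Hm; apply Hby; lia.
Qed.
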